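(* Under the standing assumptions, define for real $z\in[0,n]$ $$\Phi_c(z)=\frac{\Gamma(n+1)}{\Gamma(z+1)\Gamma(n-z+1)}\left(\frac1d\right)^{z}\left(1-\frac1d\right)^{n-z}f\!\left(\frac zn\right)^{rm},$$ where $\Gamma$ is the Gamma function. Then $\Phi_c(\omega)=\Phi(\omega)$ for $\omega=1,2,\dots,n$, and, for all sufficiently large $n$, $\Phi_c'(z)<0$ for all $z\in(n\eta_1,n\eta_2)$.
   Context: Parameters: integer $k\ge2$, constants $\alpha>0$, $r>0$, $0<p<1$; $d=n^{\alpha}$ (treated as an integer), $m=n\ln d$, $\tau=\frac1{1-p}$, $r_{cr}=\frac1{\ln\tau}$. Standing assumptions: $(2k-1)\alpha>1$, $k\alpha\le1$, $k\ge\frac{\tau\ln\tau}{\tau-1}$, and $r<r_{cr}$. Notation: $f(s)=1+\frac{p}{1-p}\cdot\frac{s^k-d^{-k}}{1-d^{-k}}$ for $s\in[0,1]$; $B(S)=\binom{n}{S}\left(\frac1d\right)^{S}\left(1-\frac1d\right)^{n-S}$; $W(S)=f(S/n)^{rm}$; $\Phi(S)=B(S)W(S)$. Let $\lambda>0$ be a fixed constant and $\eta_1=\frac1d+\frac{\lambda}{n^{1-(k-1)\alpha}\ln d}$. Let $\alpha_0=\frac{(2k-1)\alpha-1}{2(k-1)}$, and let $\eta_2,\eta_3,\mu$ be constants with $0<\eta_2<\eta_3<1$, $\alpha_0/\alpha-\mu\eta_2^{k-1}>0$, $\mu>\frac{kpr}{1-p}$, and $r\ln(1-p)+\eta_3>0$.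 *)

From Stdlib Require Import Reals.
From Coquelicot Require Import Coquelicot.
Open Scope R_scope.

(* Euler's Gamma function: Gamma(x) = int_0^oo t^(x-1) e^(-t) dt (used for x >= 1). *)
Definition Gamma (x : R) : R :=
  RInt_gen (fun t => Rpower t (x - 1) * exp (- t)) (at_right 0) (Rbar_locally p_infty).

Definition dd (alpha : R) (n : nat) : R := Rpower (INR n) alpha.
Definition mm (alpha : R) (n : nat) : R := INR n * ln (dd alpha n).

Definition tau (p : R) : R := 1 / (1 - p).
Definition r_cr (p : R) : R := 1 / ln (tau p).

Definition f (k : nat) (p d s : R) : R :=
  1 + p / (1 - p) * ((s ^ k - / d ^ k) / (1 - / d ^ k)).

Definition B (alpha : R) (n S : nat) : R :=
  Binomial.C n S * (1 / dd alpha n) ^ S * (1 - 1 / dd alpha n) ^ (n - S).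

Definition W (k : nat) (alpha r p : R) (n S : nat) : R :=
  Rpower (f k p (dd alpha n) (INR S / INR n)) (r * mm alpha n).

Definition Phi (k : nat) (alpha r p : R) (n S : nat) : R :=
  B alpha n S * W k alpha r p n S.

Definition Phi_c (k : nat) (alpha r p : R) (n : nat) (z : R) : R :=
  Gamma (INR n + 1) / (Gamma (z + 1) * Gamma (INR n - z + 1))
  * Rpower (1 / dd alpha n) z
  * Rpower (1 - 1 / dd alpha n) (INR n - z)
  * Rpower (f k p (dd alpha n) (z / INR n)) (r * mm alpha n).

Definition eta1 (k : nat) (alpha lambda : R) (n : nat) : R :=
  1 / dd alpha n
  + lambda / (Rpower (INR n) (1 - (INR k - 1) * alpha) * ln (dd alpha n)).

Definition alpha0 (k : nat) (alpha : R) : R :=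
  ((2 * INR k - 1) * alpha - 1) / (2 * (INR k - 1)).

From Pilot Require Import Defs.
From Stdlib Require Import Reals Lra Lia Factorial.
From Coquelicot Require Import Coquelicot.
Import Defs.
Open Scope R_scope.

(** The first claim then follows from [Gamma (m+1) = m!]. For the second,
    [Phi_c' = (Phi_c'/Phi_c) Phi_c] with [Phi_c > 0], and by the digamma bounds
    the logarithmic derivative is at most [phi x = 2/n - x + A e^((k-1) x)],
    where [x = ln (z d / n)] and [A = mu ln d / d^(k-1)]. Since [phi] is convex
    it is negative on the window once it is negative at both ends; this holds
    for [ln n] large, where the competing terms are powers of [ln n] times
    exponentially small powers of [n]. *)

Lemma ln_le_sub1 y : 0 < y -> ln y <= y - 1.
Proof. intros Hy. pose proof (exp_ineq1_le (ln y)) as H. rewrite exp_ln in H; lra. Qed.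

Lemma exp_le_compat x y : x <= y -> exp x <= exp y.
Proof.
  intros H. destruct (Rle_lt_or_eq_dec _ _ H) as [Hlt| ->]; [left; now apply exp_increasing|lra].
Qed.

(* [exp (-y) * (1 + y) <= 1]: the reciprocal form of [1 + y <= exp y]. *)
Lemma exp_neg_mul_1p y : exp (- y) * (1 + y) <= 1.
Proof.
  pose proof (exp_ineq1_le y). pose proof (exp_pos (- y)).
  assert (exp (- y) * exp y = 1) by (rewrite <- exp_plus, Rplus_opp_l; apply exp_0).
  nra.
Qed.

Lemma Rpower_pos t c : 0 < Rpower t c.
Proof. apply exp_pos. Qed.

Lemma Rpower_antimono_le1 t a b : 0 < t <= 1 -> a <= b -> Rpower t b <= Rpower t a.
Proof.
  intros Ht Hab. unfold Rpower. apply exp_le_compat.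
  assert (ln t <= 0) by (rewrite <- ln_1; apply ln_le; lra). nra.
Qed.

Lemma is_derive_Rpower_base t c :
  0 < t -> is_derive (fun u => Rpower u c) t (c * Rpower t (c - 1)).
Proof. intros. apply is_derive_Reals, derivable_pt_lim_power; auto. Qed.

Lemma exp_taylor2 y : Rabs (exp y - 1 - y) <= y * y * exp (Rabs y).
Proof.
  pose proof (exp_ineq1_le y). rewrite Rabs_right by lra.
  assert (Hinv : exp y * exp (- y) = 1) by (rewrite <- exp_plus, Rplus_opp_r; apply exp_0).
  destruct (Rle_or_lt (-1) y) as [Hy|Hy].
  - pose proof (exp_ineq1_le (- y)). pose proof (exp_pos y).
    assert (exp y <= exp (Rabs y)) by (apply exp_le_compat, Rle_abs).
    assert (exp (- y) * (1 + y) >= (1 - y) * (1 + y)) by nra.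
    assert (exp y - 1 - y <= y * y * exp y) by nra. nra.
  - assert (exp y <= 1) by (rewrite <- exp_0; apply exp_le_compat; lra).
    assert (1 <= exp (Rabs y)) by (rewrite <- exp_0; apply exp_le_compat, Rabs_pos).
    nra.
Qed.

Lemma abs_ln_le_Rpower t w :
  0 < t -> 0 < w -> Rabs (ln t) <= (Rpower t w + Rpower t (- w)) / w.
Proof.
  intros Ht Hw.
  pose proof (ln_le_sub1 _ (Rpower_pos t w)) as H1. rewrite ln_Rpower in H1.
  pose proof (ln_le_sub1 _ (Rpower_pos t (- w))) as H2. rewrite ln_Rpower in H2.
  pose proof (Rpower_pos t w). pose proof (Rpower_pos t (- w)).
  apply Rmult_le_reg_r with w; auto.
  replace ((Rpower t w + Rpower t (- w)) / w * w) with (Rpower t w + Rpower t (- w))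
    by (field; lra).
  unfold Rabs; destruct Rcase_abs; nra.
Qed.

Lemma Rpower_le_exp_half c :
  0 <= c -> exists K, 0 < K /\ forall t, 0 < t -> Rpower t c <= K * exp (t / 2).
Proof.
  intros Hc. destruct (Rle_lt_or_eq_dec _ _ Hc) as [Hc'| <-].
  - exists (exp (c * ln (2 * c) - c)). split; [apply exp_pos|]. intros t Ht.
    rewrite <- exp_plus. unfold Rpower. apply exp_le_compat.
    assert (ln t <= ln (2 * c) + t / (2 * c) - 1).
    { pose proof (ln_le_sub1 (t / (2 * c)) ltac:(apply Rdiv_lt_0_compat; lra)) as H.
      rewrite ln_div in H by lra. lra. }
    apply Rle_trans with (c * (ln (2 * c) + t / (2 * c) - 1)); [apply Rmult_le_compat_l; lra|].
    right. field. lra.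
  - exists 1. split; [lra|]. intros t Ht. rewrite Rpower_O by auto.
    pose proof (exp_ineq1_le (t / 2)). lra.
Qed.

(** Improper integrals over [(0, +oo)], in the elementary epsilon-delta form:
    [∫_a^b f] is within [eps] of [l] as soon as [a] is small and [b] is large.
    This form makes comparison and existence-by-domination arguments direct;
    [improper_RInt_gen] identifies the value with Coquelicot's [RInt_gen]. *)

Definition loc_int (f : R -> R) : Prop :=
  forall a b, 0 < a -> a <= b -> ex_RInt f a b.

Definition improper (f : R -> R) (l : R) : Prop :=
  loc_int f /\
  forall eps, 0 < eps -> exists del, 0 < del <= 1 /\ exists M, 1 <= M /\
    forall a b, 0 < a < del -> M < b -> Rabs (RInt f a b - l) < eps.

Lemma loc_int_continuous f : (forall t, 0 < t -> continuous f t) -> loc_int f.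
Proof.
  intros H a b Ha Hab. apply (@ex_RInt_continuous R_CompleteNormedModule). intros z Hz.
  apply H. rewrite Rmin_left in Hz; lra.
Qed.

Lemma improper_plus f g lf lg :
  improper f lf -> improper g lg -> improper (fun t => f t + g t) (lf + lg).
Proof.
  intros [Lf Hf] [Lg Hg]. split.
  { intros a b Ha Hab. apply (@ex_RInt_plus R_NormedModule); auto. }
  intros eps He. destruct (Hf (eps / 2)) as [d1 [Hd1 [M1 [HM1 H1]]]]; [lra|].
  destruct (Hg (eps / 2)) as [d2 [Hd2 [M2 [HM2 H2]]]]; [lra|].
  pose proof (Rmin_l d1 d2). pose proof (Rmin_r d1 d2).
  pose proof (Rmax_l M1 M2). pose proof (Rmax_r M1 M2).
  exists (Rmin d1 d2). split; [split; [apply Rmin_glb_lt|]; lra|].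
  exists (Rmax M1 M2). split; [lra|]. intros a b Ha Hb.
  rewrite (@RInt_plus R_CompleteNormedModule) by (apply Lf || apply Lg; lra).
  specialize (H1 a b ltac:(lra) ltac:(lra)). specialize (H2 a b ltac:(lra) ltac:(lra)).
  revert H1 H2. unfold plus; simpl. unfold Rabs. repeat destruct Rcase_abs; lra.
Qed.

Lemma improper_scal c f l : improper f l -> improper (fun t => c * f t) (c * l).
Proof.
  intros [Lf Hf]. split.
  { intros a b Ha Hab. apply (@ex_RInt_scal R_NormedModule); auto. }
  intros eps He. pose proof (Rabs_pos c) as Hc.
  destruct (Hf (eps / (Rabs c + 1))) as [d [Hd [M [HM H]]]];
    [apply Rdiv_lt_0_compat; lra|].
  exists d. split; auto. exists M. split; auto. intros a b Ha Hb.
  rewrite (@RInt_scal R_CompleteNormedModule) by (apply Lf; lra). unfold scal; simpl.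
  unfold mult; simpl.
  replace (c * RInt f a b - c * l) with (c * (RInt f a b - l)) by ring.
  rewrite Rabs_mult. specialize (H a b Ha Hb). pose proof (Rabs_pos (RInt f a b - l)).
  apply Rle_lt_trans with (Rabs c * (eps / (Rabs c + 1))); [apply Rmult_le_compat_l; lra|].
  apply Rlt_le_trans with ((Rabs c + 1) * (eps / (Rabs c + 1))).
  - apply Rmult_lt_compat_r; [apply Rdiv_lt_0_compat|]; lra.
  - right. field. lra.
Qed.

Lemma improper_ext f g l :
  (forall t, 0 < t -> f t = g t) -> improper f l -> improper g l.
Proof.
  intros E [Lf Hf].
  assert (RE : forall a b, 0 < a -> a <= b -> RInt f a b = RInt g a b).
  { intros a b Ha Hab. apply RInt_ext. intros x Hx. rewrite Rmin_left in Hx by lra. apply E; lra. }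
  split.
  - intros a b Ha Hab. apply ex_RInt_ext with f; auto.
    intros x Hx. rewrite Rmin_left in Hx by lra. apply E; lra.
  - intros eps He. destruct (Hf eps He) as [d [Hd [M [HM H]]]].
    exists d. split; auto. exists M. split; auto. intros a b Ha Hb. rewrite <- RE by lra. auto.
Qed.

Lemma improper_le f g lf lg :
  (forall t, 0 < t -> f t <= g t) -> improper f lf -> improper g lg -> lf <= lg.
Proof.
  intros Hle [Lf Hf] [Lg Hg]. apply Rnot_lt_le. intros Hlt.
  set (eps := (lf - lg) / 2).
  destruct (Hf eps) as [d1 [Hd1 [M1 [HM1 H1]]]]; [unfold eps; lra|].
  destruct (Hg eps) as [d2 [Hd2 [M2 [HM2 H2]]]]; [unfold eps; lra|].
  set (a := Rmin d1 d2 / 2). set (b := Rmax M1 M2 + 1).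
  pose proof (Rmin_l d1 d2). pose proof (Rmin_r d1 d2).
  pose proof (Rmax_l M1 M2). pose proof (Rmax_r M1 M2).
  assert (0 < Rmin d1 d2) by (apply Rmin_glb_lt; lra).
  specialize (H1 a b ltac:(unfold a; lra) ltac:(unfold b; lra)).
  specialize (H2 a b ltac:(unfold a; lra) ltac:(unfold b; lra)).
  assert (RInt f a b <= RInt g a b).
  { apply RInt_le; [unfold a, b; lra | apply Lf | apply Lg | ]; try (unfold a, b; lra).
    intros x Hx. apply Hle. unfold a in Hx; lra. }
  revert H1 H2. unfold Rabs, eps. repeat destruct Rcase_abs; lra.
Qed.

Lemma improper_abs_le f g lf lg :
  (forall t, 0 < t -> Rabs (f t) <= g t) -> improper f lf -> improper g lg -> Rabs lf <= lg.
Proof.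
  intros Hfg Hf Hg.
  assert (lf <= lg).
  { apply (improper_le f g); [|exact Hf | exact Hg].
    intros t Ht. specialize (Hfg t Ht). revert Hfg. unfold Rabs; destruct Rcase_abs; lra. }
  assert (-1 * lf <= lg).
  { apply (improper_le (fun t => -1 * f t) g); [| now apply improper_scal | exact Hg].
    intros t Ht. specialize (Hfg t Ht). revert Hfg. unfold Rabs; destruct Rcase_abs; lra. }
  unfold Rabs; destruct Rcase_abs; lra.
Qed.

Lemma improper_unique f l1 l2 : improper f l1 -> improper f l2 -> l1 = l2.
Proof. intros. apply Rle_antisym; apply (improper_le f f); auto; intros; lra. Qed.

Lemma RInt_nonneg_mono h a a0 b0 b :
  loc_int h -> (forall t, 0 < t -> 0 <= h t) ->
  0 < a -> a <= a0 -> a0 <= b0 -> b0 <= b -> RInt h a0 b0 <= RInt h a b.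
Proof.
  intros Lh Hp Ha H1 H2 H3.
  rewrite <- (RInt_Chasles h a a0 b), <- (RInt_Chasles h a0 b0 b) by (apply Lh; lra).
  assert (0 <= RInt h a a0) by (apply RInt_ge_0; [lra | apply Lh; lra | intros; apply Hp; lra]).
  assert (0 <= RInt h b0 b) by (apply RInt_ge_0; [lra | apply Lh; lra | intros; apply Hp; lra]).
  unfold plus; simpl. lra.
Qed.

Lemma RInt_le_improper h l a b :
  (forall t, 0 < t -> 0 <= h t) -> improper h l -> 0 < a -> a <= b -> RInt h a b <= l.
Proof.
  intros Hp [Lh Hh] Ha Hab. apply Rnot_lt_le. intros Hlt.
  set (eps := (RInt h a b - l) / 2).
  destruct (Hh eps) as [d [Hd [M [HM H]]]]; [unfold eps; lra|].
  set (a' := Rmin d a / 2). set (b' := Rmax M b + 1).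
  pose proof (Rmin_l d a). pose proof (Rmin_r d a).
  pose proof (Rmax_l M b). pose proof (Rmax_r M b).
  assert (0 < Rmin d a) by (apply Rmin_glb_lt; lra).
  specialize (H a' b' ltac:(unfold a'; lra) ltac:(unfold b'; lra)).
  assert (RInt h a b <= RInt h a' b')
    by (apply RInt_nonneg_mono; auto; unfold a', b'; lra).
  revert H. unfold Rabs, eps. destruct Rcase_abs; lra.
Qed.

(* Monotone convergence in its simplest form: a nonnegative integrand bounded
   by an integrable one is integrable (its integral is a supremum). *)
Lemma improper_of_nonneg_bounded h g lg :
  loc_int h -> (forall t, 0 < t -> 0 <= h t <= g t) -> improper g lg ->
  exists l, improper h l.
Proof.
  intros Lh Hhg Hg.
  set (E := fun y => exists a b, 0 < a <= b /\ y = RInt h a b).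
  assert (Hb : bound E).
  { exists lg. intros y [a [b [Hab ->]]]. apply Rle_trans with (RInt g a b).
    - apply RInt_le; try lra; [apply Lh; lra | apply (proj1 Hg); lra | intros; apply Hhg; lra].
    - apply RInt_le_improper; auto; try lra. intros t Ht; specialize (Hhg t Ht); lra. }
  assert (Hne : exists y, E y) by (exists (RInt h 1 1), 1, 1; split; [lra|auto]).
  destruct (completeness E Hb Hne) as [l [Hub Hlub]].
  exists l. split; auto. intros eps He.
  assert (exists y, E y /\ l - eps < y) as [y [[a0 [b0 [Hab0 ->]]] Hy]].
  { apply Classical_Prop.NNPP. intro Hn. assert (l <= l - eps); [|lra].
    apply Hlub. intros y Ey. apply Rnot_lt_le. intro. apply Hn. exists y; split; auto. }
  pose proof (Rmin_l a0 1). pose proof (Rmin_r a0 1).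
  pose proof (Rmax_l b0 1). pose proof (Rmax_r b0 1).
  exists (Rmin a0 1). split; [split; [apply Rmin_glb_lt|]; lra|].
  exists (Rmax b0 1). split; [lra|]. intros a b Ha Hb2.
  assert (RInt h a0 b0 <= RInt h a b).
  { apply RInt_nonneg_mono; auto; try lra. intros t Ht; specialize (Hhg t Ht); lra. }
  assert (RInt h a b <= l) by (apply Hub; exists a, b; split; auto; lra).
  unfold Rabs; destruct Rcase_abs; lra.
Qed.

Lemma improper_of_dominated f g lg :
  loc_int f -> (forall t, 0 < t -> Rabs (f t) <= g t) -> improper g lg ->
  exists l, improper f l.
Proof.
  intros Lf Hfg Hg.
  destruct (improper_of_nonneg_bounded (fun t => f t + g t) (fun t => 2 * g t) (2 * lg))
    as [lh Hh].
  - intros a b Ha Hab. apply (@ex_RInt_plus R_NormedModule); [apply Lf | apply Hg]; lra.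
  - intros t Ht. specialize (Hfg t Ht). revert Hfg. unfold Rabs; destruct Rcase_abs; lra.
  - now apply improper_scal.
  - exists (lh + -1 * lg). apply improper_ext with (fun t => (f t + g t) + -1 * g t).
    + intros; ring.
    + apply improper_plus; auto. now apply improper_scal.
Qed.

Lemma improper_RInt_gen f l :
  improper f l -> RInt_gen f (at_right 0) (Rbar_locally p_infty) = l.
Proof.
  intros [Lf Hf]. apply is_RInt_gen_unique.
  intros P [eps HP].
  destruct (Hf eps (cond_pos eps)) as [d [Hd [M [HM H]]]].
  apply Filter_prod with (fun a => 0 < a < d) (fun b => M < b).
  - exists (mkposreal d ltac:(lra)). intros y Hy Hy0. split; auto.
    revert Hy. unfold ball; simpl. unfold AbsRing_ball, abs, minus, plus, opp; simpl.
    unfold Rabs; destruct Rcase_abs; lra.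
  - exists M. auto.
  - intros a b Ha Hb. exists (RInt f a b). split.
    + apply (@RInt_correct R_CompleteNormedModule). apply Lf; simpl; lra.
    + apply HP. unfold ball; simpl; unfold AbsRing_ball, abs, minus, plus, opp; simpl.
      apply H; simpl; lra.
Qed.

Lemma continuous_exp_neg q t : continuous (fun t => exp (- (q * t))) t.
Proof. apply (@ex_derive_continuous R_AbsRing R_NormedModule). auto_derive; auto. Qed.

Lemma RInt_exp_neg q a b : 0 < q ->
  RInt (fun t => exp (- (q * t))) a b = (exp (- (q * a)) - exp (- (q * b))) / q.
Proof.
  intros Hq. apply is_RInt_unique.
  replace ((exp (- (q * a)) - exp (- (q * b))) / q)
    with (minus (- exp (- (q * b)) / q) (- exp (- (q * a)) / q))
    by (unfold minus, plus, opp; simpl; field; lra).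
  apply (@is_RInt_derive R_CompleteNormedModule (fun t => - exp (- (q * t)) / q)).
  - intros x _. auto_derive; auto. field. lra.
  - intros x _. apply continuous_exp_neg.
Qed.

Lemma improper_exp_neg q : 0 < q -> improper (fun t => exp (- (q * t))) (1 / q).
Proof.
  intros Hq. split; [apply loc_int_continuous; intros; apply continuous_exp_neg|].
  intros eps He. pose proof (Rmin_l 1 (eps / 2)). pose proof (Rmin_r 1 (eps / 2)).
  pose proof (Rmax_l 1 (2 / (q * q * eps))). pose proof (Rmax_r 1 (2 / (q * q * eps))).
  exists (Rmin 1 (eps / 2)). split; [split; [apply Rmin_glb_lt|]; lra|].
  exists (Rmax 1 (2 / (q * q * eps))). split; [lra|]. intros a b Ha Hb.
  rewrite RInt_exp_neg by auto.
  assert (Ea : 1 - q * a <= exp (- (q * a))) by (pose proof (exp_ineq1_le (- (q * a))); lra).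
  assert (Ea' : exp (- (q * a)) <= 1) by (rewrite <- exp_0; apply exp_le_compat; nra).
  assert (Eb : exp (- (q * b)) * (1 + q * b) <= 1) by apply exp_neg_mul_1p.
  pose proof (exp_pos (- (q * b))).
  assert (Hqb : 2 / (q * eps) < q * b).
  { apply Rle_lt_trans with (q * (2 / (q * q * eps))).
    - right. field. lra.
    - apply Rmult_lt_compat_l; lra. }
  assert (Eb' : exp (- (q * b)) < q * eps / 2).
  { assert (0 < 2 / (q * eps)) by (apply Rdiv_lt_0_compat; nra).
    apply Rmult_lt_reg_r with (2 / (q * eps)); auto.
    replace (q * eps / 2 * (2 / (q * eps))) with 1 by (field; lra). nra. }
  replace ((exp (- (q * a)) - exp (- (q * b))) / q - 1 / q)
    with (((exp (- (q * a)) - 1) - exp (- (q * b))) / q) by (field; lra).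
  rewrite Rabs_div, (Rabs_right q) by lra.
  apply Rmult_lt_reg_r with q; auto.
  replace (Rabs (exp (- (q * a)) - 1 - exp (- (q * b))) / q * q)
    with (Rabs (exp (- (q * a)) - 1 - exp (- (q * b)))) by (field; lra).
  unfold Rabs; destruct Rcase_abs; nra.
Qed.

Lemma improper_derivative_vanishing F dF :
  (forall t, 0 < t -> is_derive F t (dF t)) ->
  (forall t, 0 < t -> continuous dF t) ->
  (forall eps, 0 < eps -> exists del, 0 < del <= 1 /\ forall a, 0 < a < del -> Rabs (F a) < eps) ->
  (forall eps, 0 < eps -> exists M, 1 <= M /\ forall b, M < b -> Rabs (F b) < eps) ->
  improper dF 0.
Proof.
  intros HdF Hc H0 Hoo. split; [now apply loc_int_continuous|].
  intros eps He. destruct (H0 (eps / 2)) as [d [Hd Ha]]; [lra|].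
  destruct (Hoo (eps / 2)) as [M [HM Hb]]; [lra|].
  exists d. split; auto. exists M. split; auto. intros a b Ha' Hb'.
  replace (RInt dF a b) with (F b - F a).
  - specialize (Ha a Ha'). specialize (Hb b Hb').
    revert Ha Hb. unfold Rabs. repeat destruct Rcase_abs; lra.
  - symmetry. apply is_RInt_unique.
    apply (@is_RInt_derive R_CompleteNormedModule F dF);
      intros t Ht; rewrite Rmin_left in Ht by lra; [apply HdF | apply Hc]; lra.
Qed.

(** The Gamma function as an improper integral. *)

(* The Gamma integrand [t^c e^(-t)], so that [Gamma x = ∫_0^oo gamma_kernel (x-1)]. *)
Definition gamma_kernel (c t : R) : R := Rpower t c * exp (- t).

Lemma gamma_kernel_pos c t : 0 < gamma_kernel c t.
Proof. apply Rmult_lt_0_compat; [apply Rpower_pos | apply exp_pos]. Qed.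

Lemma gamma_kernel_continuous c t : 0 < t -> continuous (gamma_kernel c) t.
Proof.
  intros Ht. apply (@ex_derive_continuous R_AbsRing R_NormedModule).
  exists (c * Rpower t (c - 1) * exp (- t) + Rpower t c * - exp (- t)).
  apply (is_derive_mult (fun u => Rpower u c) (fun u => exp (- u))).
  - now apply is_derive_Rpower_base.
  - auto_derive; auto. ring.
  - intros; apply Rmult_comm.
Qed.

(* The kernel is integrable for [c >= 0], being dominated by [K e^(-t/2)]. *)
Lemma improper_gamma_kernel c : 0 <= c -> exists l, improper (gamma_kernel c) l.
Proof.
  intros Hc. destruct (Rpower_le_exp_half c Hc) as [K [HK HB]].
  apply improper_of_dominated with (fun t => K * exp (- ((1 / 2) * t))) (K * (1 / (1 / 2))).
  - apply loc_int_continuous. intros; now apply gamma_kernel_continuous.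
  - intros t Ht. rewrite Rabs_right by (left; apply gamma_kernel_pos). unfold gamma_kernel.
    replace (exp (- ((1 / 2) * t))) with (exp (t / 2) * exp (- t))
      by (rewrite <- exp_plus; f_equal; field).
    rewrite <- Rmult_assoc. apply Rmult_le_compat_r; [left; apply exp_pos | auto].
  - apply improper_scal, improper_exp_neg. lra.
Qed.

Lemma Gamma_improper x : 1 <= x -> improper (gamma_kernel (x - 1)) (Gamma x).
Proof.
  intros Hx. destruct (improper_gamma_kernel (x - 1)) as [l Hl]; [lra|].
  unfold Gamma. change (fun t => Rpower t (x - 1) * exp (- t)) with (gamma_kernel (x - 1)).
  now rewrite (improper_RInt_gen _ l Hl).
Qed.

Lemma Gamma_1 : Gamma 1 = 1.
Proof.
  apply (improper_unique (gamma_kernel (1 - 1))); [apply Gamma_improper; lra|].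
  assert (H1 := improper_exp_neg 1 ltac:(lra)). replace (1 / 1) with 1 in H1 by field.
  apply improper_ext with (fun t => exp (- (1 * t))); auto.
  intros t Ht. unfold gamma_kernel. replace (1 - 1) with 0 by ring.
  rewrite Rpower_O, Rmult_1_l, Rmult_1_l by auto. reflexivity.
Qed.

(* The kernel [t^x e^(-t)] vanishes at [0+] for [x >= 1] (it is at most [t]) ... *)
Lemma gamma_kernel_vanishes_at_0 x : 1 <= x ->
  forall eps, 0 < eps ->
  exists del, 0 < del <= 1 /\ forall a, 0 < a < del -> gamma_kernel x a < eps.
Proof.
  intros Hx eps He. exists (Rmin 1 eps). split; [split; [apply Rmin_glb_lt|apply Rmin_l]; lra|].
  intros a Ha. pose proof (Rmin_l 1 eps). pose proof (Rmin_r 1 eps). unfold gamma_kernel.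
  assert (Rpower a x <= a)
    by (rewrite <- (Rpower_1 a) at 2 by lra; apply Rpower_antimono_le1; lra).
  assert (exp (- a) <= 1) by (rewrite <- exp_0; apply exp_le_compat; lra).
  pose proof (Rpower_pos a x). nra.
Qed.

(* ... and at [+oo] (it is at most [K e^(-t/2)]). *)
Lemma gamma_kernel_vanishes_at_oo x : 0 <= x ->
  forall eps, 0 < eps -> exists M, 1 <= M /\ forall b, M < b -> gamma_kernel x b < eps.
Proof.
  intros Hx eps He. destruct (Rpower_le_exp_half x Hx) as [K [HK HB]].
  exists (Rmax 1 (2 * K / eps)). split; [apply Rmax_l|].
  intros b Hb. pose proof (Rmax_l 1 (2 * K / eps)). pose proof (Rmax_r 1 (2 * K / eps)).
  assert (Hb2 : gamma_kernel x b <= K * exp (- (b / 2))).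
  { apply Rle_trans with (K * exp (b / 2) * exp (- b)).
    - apply Rmult_le_compat_r; [left; apply exp_pos | apply HB; lra].
    - rewrite Rmult_assoc, <- exp_plus. right. do 2 f_equal. field. }
  pose proof (exp_neg_mul_1p (b / 2)). pose proof (exp_pos (- (b / 2))).
  assert (2 * K < b * eps).
  { apply Rmult_lt_reg_r with (/ eps); [apply Rinv_0_lt_compat; lra|].
    replace (b * eps * / eps) with b by (field; lra). lra. }
  assert (K * exp (- (b / 2)) * (b / 2) < eps * (b / 2)) by nra.
  assert (K * exp (- (b / 2)) < eps) by (apply Rmult_lt_reg_r with (b / 2); lra).
  lra.
Qed.

(* The functional equation, from integrating [d/dt (- t^x e^(-t))] over [(0, +oo)]. *)
Lemma Gamma_rec x : 1 <= x -> Gamma (x + 1) = x * Gamma x.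
Proof.
  intros Hx.
  set (dF := fun t => gamma_kernel x t + (- x) * gamma_kernel (x - 1) t).
  assert (HF0 : improper dF 0).
  { apply improper_derivative_vanishing with (fun t => - gamma_kernel x t).
    - intros t Ht. unfold dF, gamma_kernel.
      replace (Rpower t x * exp (- t) + - x * (Rpower t (x - 1) * exp (- t)))
        with (opp (x * Rpower t (x - 1) * exp (- t) + Rpower t x * - exp (- t)))
        by (unfold opp; simpl; ring).
      apply (@is_derive_opp R_AbsRing R_NormedModule).
      apply (is_derive_mult (fun u => Rpower u x) (fun u => exp (- u)));
        [now apply is_derive_Rpower_base | auto_derive; auto; ring | intros; apply Rmult_comm].
    - intros t Ht. unfold dF.
      apply (@continuous_plus R_UniformSpace R_AbsRing R_NormedModule);
        [|apply (@continuous_mult R_UniformSpace R_AbsRing);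
          [apply (@continuous_const R_UniformSpace R_UniformSpace)|]];
        now apply gamma_kernel_continuous.
    - intros eps He. destruct (gamma_kernel_vanishes_at_0 x Hx eps He) as [del [Hdel H]].
      exists del. split; auto. intros a Ha.
      rewrite Rabs_Ropp, Rabs_right by (left; apply gamma_kernel_pos). auto.
    - intros eps He. destruct (gamma_kernel_vanishes_at_oo x ltac:(lra) eps He) as [M [HM H]].
      exists M. split; auto. intros b Hb.
      rewrite Rabs_Ropp, Rabs_right by (left; apply gamma_kernel_pos). auto. }
  assert (HF : improper dF (Gamma (x + 1) + (- x) * Gamma x)).
  { apply improper_plus.
    - replace x with (x + 1 - 1) at 1 by ring. apply Gamma_improper; lra.
    - apply improper_scal, Gamma_improper; lra. }
  pose proof (improper_unique _ _ _ HF0 HF). lra.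
Qed.

(* [Gamma x >= ∫_1^2 t^(x-1) e^(-t) dt >= e^(-2)]. *)
Lemma Gamma_pos x : 1 <= x -> 0 < Gamma x.
Proof.
  intros Hx.
  apply Rlt_le_trans with (RInt (gamma_kernel (x - 1)) 1 2).
  2: { apply RInt_le_improper;
         [intros; left; apply gamma_kernel_pos | now apply Gamma_improper | lra | lra]. }
  apply Rlt_le_trans with (RInt (fun _ => exp (-2)) 1 2).
  { rewrite RInt_const. unfold scal; simpl; unfold mult; simpl. pose proof (exp_pos (-2)). lra. }
  apply RInt_le; [lra | apply ex_RInt_const | |].
  { apply loc_int_continuous; [|lra|lra]. intros; now apply gamma_kernel_continuous. }
  intros t Ht. unfold gamma_kernel. rewrite <- (Rmult_1_l (exp (-2))).
  apply Rmult_le_compat; [lra | left; apply exp_pos | | apply exp_le_compat; lra].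
  rewrite <- (Rpower_O t) at 1 by lra. apply Rle_Rpower; lra.
Qed.

Lemma Gamma_nat m : Gamma (INR m + 1) = INR (fact m).
Proof.
  induction m as [|m IH].
  - simpl. rewrite Rplus_0_l. apply Gamma_1.
  - rewrite S_INR, Gamma_rec, IH, fact_simpl, mult_INR, S_INR by (pose proof (pos_INR m); lra).
    ring.
Qed.

(** Differentiability of Gamma under the integral sign. *)

(* The [x]-derivative of the Gamma integrand: [t^c ln t e^(-t)]. *)
Definition gamma_kernel_ln (c t : R) : R := Rpower t c * ln t * exp (- t).

Definition dGamma (x : R) : R :=
  RInt_gen (gamma_kernel_ln (x - 1)) (at_right 0) (Rbar_locally p_infty).

(* The logarithmic kernel is integrable for [c > 0], using
   [|ln t| <= (t^(c/2) + t^(-c/2)) / (c/2)]. *)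
Lemma improper_gamma_kernel_ln c : 0 < c -> exists l, improper (gamma_kernel_ln c) l.
Proof.
  intros Hc. destruct (improper_gamma_kernel (c + c / 2)) as [l1 H1]; [lra|].
  destruct (improper_gamma_kernel (c - c / 2)) as [l2 H2]; [lra|].
  apply improper_of_dominated with
    (fun t => / (c / 2) * (gamma_kernel (c + c / 2) t + gamma_kernel (c - c / 2) t))
    (/ (c / 2) * (l1 + l2)).
  - apply loc_int_continuous. intros t Ht. unfold gamma_kernel_ln.
    apply (@ex_derive_continuous R_AbsRing R_NormedModule).
    exists ((c * Rpower t (c - 1) * ln t + Rpower t c * / t) * exp (- t)
            + Rpower t c * ln t * - exp (- t)).
    apply (is_derive_mult (fun u => Rpower u c * ln u) (fun u => exp (- u)));
      [|auto_derive; auto; ring | intros; apply Rmult_comm].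
    apply (is_derive_mult (fun u => Rpower u c) ln);
      [now apply is_derive_Rpower_base | | intros; apply Rmult_comm].
    apply is_derive_Reals, derivable_pt_lim_ln; auto.
  - intros t Ht. unfold gamma_kernel_ln, gamma_kernel. unfold Rminus.
    rewrite !Rpower_plus.
    pose proof (abs_ln_le_Rpower t (c / 2) Ht ltac:(lra)).
    pose proof (Rpower_pos t c). pose proof (exp_pos (- t)). pose proof (Rabs_pos (ln t)).
    rewrite !Rabs_mult, (Rabs_right (Rpower t c)), (Rabs_right (exp (- t))) by lra.
    apply Rle_trans with
      (Rpower t c * ((Rpower t (c / 2) + Rpower t (- (c / 2))) / (c / 2)) * exp (- t)).
    + apply Rmult_le_compat_r; [lra|]. apply Rmult_le_compat_l; lra.
    + right. field. lra.
  - apply improper_scal, improper_plus; auto.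
Qed.

Lemma dGamma_improper x : 1 < x -> improper (gamma_kernel_ln (x - 1)) (dGamma x).
Proof.
  intros Hx. destruct (improper_gamma_kernel_ln (x - 1)) as [l Hl]; [lra|].
  unfold dGamma. now rewrite (improper_RInt_gen _ l Hl).
Qed.

Lemma pow_sum_inv_cube_bound a :
  0 < a -> a ^ 4 * ((a + / a) * (a + / a) * (a + / a)) <= 8 * (a + a ^ 7).
Proof.
  intros Ha.
  replace (a ^ 4 * ((a + / a) * (a + / a) * (a + / a))) with (a ^ 7 + 3 * a ^ 5 + 3 * a ^ 3 + a)
    by (field; lra).
  assert (Hmid : forall j, (1 <= j <= 7)%nat -> a ^ j <= a + a ^ 7).
  { intros j Hj. pose proof (pow_lt a 7 Ha). pose proof (pow_lt a 1 Ha).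
    destruct (Rle_or_lt a 1) as [Ha1|Ha1].
    - assert (a ^ (j - 1) <= 1) by (rewrite <- (pow1 (j - 1)); apply pow_incr; lra).
      pose proof (pow_lt a (j - 1) Ha).
      replace j with (S (j - 1)) by lia. simpl. nra.
    - assert (a ^ j <= a ^ 7) by (apply Rle_pow; [lra | lia]). lra. }
  pose proof (Hmid 5%nat ltac:(lia)). pose proof (Hmid 3%nat ltac:(lia)).
  pose proof (pow_lt a 7 Ha).
  lra.
Qed.

Lemma exp_abs_mul_ln_le t w h :
  Rabs h <= w -> exp (Rabs (h * ln t)) <= Rpower t w + Rpower t (- w).
Proof.
  intros Hh. apply Rle_trans with (exp (w * Rabs (ln t))).
  - apply exp_le_compat. rewrite Rabs_mult.
    apply Rmult_le_compat_r; [apply Rabs_pos | exact Hh].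
  - unfold Rpower. unfold Rabs. destruct Rcase_abs.
    + replace (w * - ln t) with (- w * ln t) by ring. pose proof (exp_pos (w * ln t)). lra.
    + pose proof (exp_pos (- w * ln t)). lra.
Qed.

(* Uniform second-order Taylor bound for the kernel in its exponent [c]:
   the remainder is [h^2] times an integrable function of [t]. *)
Lemma gamma_kernel_taylor c h t :
  0 < c -> Rabs h <= c / 4 -> 0 < t ->
  Rabs (gamma_kernel (c + h) t - gamma_kernel c t - h * gamma_kernel_ln c t) <=
  h * h * (8 / ((c / 4) * (c / 4)) * (gamma_kernel (c / 4) t + gamma_kernel (7 * (c / 4)) t)).
Proof.
  intros Hc Hh Ht. set (w := c / 4). assert (Hw : 0 < w) by (unfold w; lra).
  set (a := Rpower t w). assert (Ha : 0 < a) by apply Rpower_pos.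
  assert (Hpow : forall n, Rpower t (INR n * w) = a ^ n).
  { intros n. unfold a. rewrite <- Rpower_pow, Rpower_mult by auto. f_equal. ring. }
  assert (E4 : Rpower t c = a ^ 4) by (rewrite <- Hpow; f_equal; simpl; unfold w; field).
  assert (E7 : Rpower t (7 * w) = a ^ 7) by (rewrite <- Hpow; f_equal; simpl; ring).
  set (y := h * ln t).
  assert (Eid : gamma_kernel (c + h) t - gamma_kernel c t - h * gamma_kernel_ln c t
                = a ^ 4 * exp (- t) * (exp y - 1 - y)).
  { unfold gamma_kernel, gamma_kernel_ln. rewrite Rpower_plus, E4.
    change (Rpower t h) with (exp (h * ln t)). fold y. unfold y. ring. }
  (* [|ln t|] and hence [|y|] are controlled by [a + 1/a] *)
  pose proof (abs_ln_le_Rpower t w Ht Hw) as Hln. rewrite Rpower_Ropp in Hln. fold a in Hln.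
  assert (Hia : 0 < / a) by (apply Rinv_0_lt_compat; auto).
  pose proof (exp_abs_mul_ln_le t w h Hh) as Hexpy. rewrite Rpower_Ropp in Hexpy. fold a y in Hexpy.
  assert (Hyy : y * y <= h * h * (((a + / a) / w) * ((a + / a) / w))).
  { unfold y. replace (h * ln t * (h * ln t)) with ((h * h) * (Rabs (ln t) * Rabs (ln t)))
      by (rewrite <- Rabs_mult, Rabs_right by nra; ring).
    apply Rmult_le_compat_l; [nra|]. pose proof (Rabs_pos (ln t)).
    apply Rmult_le_compat; lra. }
  pose proof (exp_taylor2 y) as Hty. pose proof (exp_pos (- t)).
  pose proof (pow_lt a 4 Ha). pose proof (pow_sum_inv_cube_bound a Ha) as Hpoly.
  rewrite Eid, Rabs_mult, Rabs_right by nra.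
  apply Rle_trans
    with (a ^ 4 * exp (- t) * (h * h * (((a + / a) / w) * ((a + / a) / w)) * (a + / a))).
  { apply Rmult_le_compat_l; [nra|]. eapply Rle_trans; [exact Hty|].
    apply Rmult_le_compat; try nra. left; apply exp_pos. }
  unfold gamma_kernel. fold w. fold a. rewrite E7.
  replace (a ^ 4 * exp (- t) * (h * h * ((a + / a) / w * ((a + / a) / w)) * (a + / a))) with
    (h * h * exp (- t) / (w * w) * (a ^ 4 * ((a + / a) * (a + / a) * (a + / a)))) by (field; lra).
  replace (h * h * (8 / (w * w) * (a * exp (- t) + a ^ 7 * exp (- t)))) with
    (h * h * exp (- t) / (w * w) * (8 * (a + a ^ 7))) by (field; lra).
  apply Rmult_le_compat_l; auto.
  apply Rmult_le_pos; [nra | left; apply Rinv_0_lt_compat; nra].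
Qed.

Lemma is_derive_of_quadratic_remainder (G : R -> R) x l del C :
  0 < del -> 0 <= C ->
  (forall h, h <> 0 -> Rabs h <= del -> Rabs (G (x + h) - G x - h * l) <= C * (h * h)) ->
  is_derive G x l.
Proof.
  intros Hdel HC Hrem. apply is_derive_Reals. intros eps He.
  assert (Hpos : 0 < Rmin del (eps / (C + 1)))
    by (apply Rmin_glb_lt; [|apply Rdiv_lt_0_compat]; lra).
  exists (mkposreal _ Hpos). intros h Hh0 Hh. simpl in Hh.
  pose proof (Rmin_l del (eps / (C + 1))). pose proof (Rmin_r del (eps / (C + 1))).
  specialize (Hrem h Hh0 ltac:(lra)).
  assert (Habs : 0 < Rabs h) by (apply Rabs_pos_lt; auto).
  replace ((G (x + h) - G x) / h - l) with ((G (x + h) - G x - h * l) / h) by (field; auto).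
  rewrite Rabs_div by auto.
  apply Rmult_lt_reg_r with (Rabs h); auto.
  replace (Rabs (G (x + h) - G x - h * l) / Rabs h * Rabs h)
    with (Rabs (G (x + h) - G x - h * l)) by (field; lra).
  replace (h * h) with (Rabs h * Rabs h) in Hrem by (rewrite <- Rabs_mult; apply Rabs_right; nra).
  assert (C * Rabs h < eps).
  { apply Rle_lt_trans with (C * (eps / (C + 1))); [apply Rmult_le_compat_l; lra|].
    apply Rlt_le_trans with ((C + 1) * (eps / (C + 1))).
    - apply Rmult_lt_compat_r; [apply Rdiv_lt_0_compat|]; lra.
    - right; field; lra. }
  nra.
Qed.

Lemma Gamma_quadratic_remainder x : 1 < x -> exists C, 0 <= C /\
  forall h, h <> 0 -> Rabs h <= (x - 1) / 4 ->
  Rabs (Gamma (x + h) - Gamma x - h * dGamma x) <= C * (h * h).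
Proof.
  intros Hx. set (c := x - 1). set (w := c / 4). assert (Hw : 0 < w) by (unfold w, c; lra).
  set (bound := fun t => 8 / (w * w) * (gamma_kernel w t + gamma_kernel (7 * w) t)).
  destruct (improper_gamma_kernel w) as [l1 H1]; [lra|].
  destruct (improper_gamma_kernel (7 * w)) as [l2 H2]; [lra|].
  set (C := 8 / (w * w) * (l1 + l2)).
  assert (HC : improper bound C) by (apply improper_scal, improper_plus; auto).
  assert (Hbound_pos : forall t, 0 < t -> 0 <= bound t).
  { intros t Ht. unfold bound. pose proof (gamma_kernel_pos w t).
    pose proof (gamma_kernel_pos (7 * w) t).
    apply Rmult_le_pos; [apply Rdiv_le_0_compat; nra | lra]. }
  exists C. split.
  { apply Rle_trans with (RInt bound 1 1); [rewrite RInt_point; unfold zero; simpl; lra|].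
    apply RInt_le_improper; auto; lra. }
  intros h Hh0 Hh.
  (* the remainder is itself an improper integral, dominated by [h^2 * bound] *)
  set (rem := fun t => gamma_kernel (c + h) t + (-1) * gamma_kernel c t
                        + (- h) * gamma_kernel_ln c t).
  assert (Hrem : improper rem (Gamma (x + h) + (-1) * Gamma x + (- h) * dGamma x)).
  { assert (Hh1 : 1 <= x + h) by (pose proof (Rabs_le_between h w); unfold w, c in *; lra).
    unfold rem. apply improper_plus; [apply improper_plus|].
    - replace (c + h) with (x + h - 1) by (unfold c; ring). now apply Gamma_improper.
    - apply improper_scal, Gamma_improper; lra.
    - apply improper_scal, dGamma_improper; lra. }
  assert (Hdom : forall t, 0 < t -> Rabs (rem t) <= h * h * bound t).
  { intros t Ht. unfold rem, bound, w.
    replace (gamma_kernel (c + h) t + -1 * gamma_kernel c t + - h * gamma_kernel_ln c t)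
      with (gamma_kernel (c + h) t - gamma_kernel c t - h * gamma_kernel_ln c t) by ring.
    apply gamma_kernel_taylor; unfold c in *; auto; lra. }
  replace (Gamma (x + h) - Gamma x - h * dGamma x)
    with (Gamma (x + h) + (-1) * Gamma x + (- h) * dGamma x) by ring.
  replace (C * (h * h)) with (h * h * C) by ring.
  exact (improper_abs_le rem (fun t => h * h * bound t) _ _ Hdom Hrem (improper_scal _ _ _ HC)).
Qed.

Lemma Gamma_derive x : 1 < x -> is_derive Gamma x (dGamma x).
Proof.
  intros Hx. destruct (Gamma_quadratic_remainder x Hx) as [C [HC Hrem]].
  apply is_derive_of_quadratic_remainder with (del := (x - 1) / 4) (C := C); auto. lra.
Qed.

(** Bounds on the digamma function [Gamma'/Gamma]: [ln x] lies between its
    values at [x] and at [x + 1]. Both follow by integrating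
    [ln t <= ln x - 1 + t/x] (resp. [ln x + 1 - x/t <= ln t]) against the kernel. *)

Lemma digamma_le_ln x : 1 < x -> dGamma x / Gamma x <= ln x.
Proof.
  intros Hx. pose proof (Gamma_pos x ltac:(lra)) as HG.
  assert (H : improper
    (fun t => (ln x - 1) * gamma_kernel (x - 1) t + (1 / x) * gamma_kernel (x + 1 - 1) t)
                       ((ln x - 1) * Gamma x + (1 / x) * Gamma (x + 1))).
  { apply improper_plus; apply improper_scal; apply Gamma_improper; lra. }
  rewrite Gamma_rec in H by lra.
  replace ((ln x - 1) * Gamma x + 1 / x * (x * Gamma x)) with (ln x * Gamma x) in H by (field; lra).
  apply Rmult_le_reg_r with (Gamma x); auto.
  replace (dGamma x / Gamma x * Gamma x) with (dGamma x) by (field; lra).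
  apply (improper_le (gamma_kernel_ln (x - 1)) _ _ _) with (2 := dGamma_improper x Hx) (3 := H).
  intros t Ht. unfold gamma_kernel_ln, gamma_kernel.
  replace (x + 1 - 1) with ((x - 1) + 1) by ring. rewrite Rpower_plus, Rpower_1 by auto.
  assert (ln t <= ln x - 1 + t / x).
  { pose proof (ln_le_sub1 (t / x) ltac:(apply Rdiv_lt_0_compat; lra)) as H0.
    rewrite ln_div in H0 by lra. lra. }
  assert (0 < Rpower t (x - 1) * exp (- t))
    by (apply Rmult_lt_0_compat; [apply Rpower_pos | apply exp_pos]).
  replace ((ln x - 1) * (Rpower t (x - 1) * exp (- t)) + 1 / x * (Rpower t (x - 1) * t * exp (- t)))
    with ((Rpower t (x - 1) * exp (- t)) * (ln x - 1 + t / x)) by (field; lra).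
  replace (Rpower t (x - 1) * ln t * exp (- t)) with ((Rpower t (x - 1) * exp (- t)) * ln t)
    by ring.
  apply Rmult_le_compat_l; lra.
Qed.

Lemma ln_le_digamma_succ x : 1 <= x -> ln x <= dGamma (x + 1) / Gamma (x + 1).
Proof.
  intros Hx. pose proof (Gamma_pos (x + 1) ltac:(lra)) as HG.
  assert (H : improper
    (fun t => (ln x + 1) * gamma_kernel (x + 1 - 1) t + (- x) * gamma_kernel (x - 1) t)
                       ((ln x + 1) * Gamma (x + 1) + (- x) * Gamma x)).
  { apply improper_plus; apply improper_scal; apply Gamma_improper; lra. }
  rewrite Gamma_rec in H |- * by lra.
  replace ((ln x + 1) * (x * Gamma x) + - x * Gamma x) with (ln x * (x * Gamma x)) in H by ring.
  apply Rmult_le_reg_r with (x * Gamma x); [rewrite <- Gamma_rec by lra; auto|].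
  replace (dGamma (x + 1) / (x * Gamma x) * (x * Gamma x)) with (dGamma (x + 1))
    by (field; split; [pose proof (Gamma_pos x Hx)|]; lra).
  apply (improper_le _ (gamma_kernel_ln (x + 1 - 1)) _ _)
    with (2 := H) (3 := dGamma_improper (x + 1) ltac:(lra)).
  intros t Ht. unfold gamma_kernel_ln, gamma_kernel.
  replace (x + 1 - 1) with ((x - 1) + 1) by ring. rewrite Rpower_plus, Rpower_1 by auto.
  assert (ln x + 1 - x / t <= ln t).
  { pose proof (ln_le_sub1 (x / t) ltac:(apply Rdiv_lt_0_compat; lra)) as H0.
    rewrite ln_div in H0 by lra. lra. }
  assert (0 < Rpower t (x - 1) * t * exp (- t))
    by (repeat apply Rmult_lt_0_compat; auto; [apply Rpower_pos | apply exp_pos]).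
  replace ((ln x + 1) * (Rpower t (x - 1) * t * exp (- t)) + - x * (Rpower t (x - 1) * exp (- t)))
    with ((Rpower t (x - 1) * t * exp (- t)) * (ln x + 1 - x / t)) by (field; lra).
  replace (Rpower t (x - 1) * t * ln t * exp (- t)) with ((Rpower t (x - 1) * t * exp (- t)) * ln t)
    by ring.
  apply Rmult_le_compat_l; lra.
Qed.

(** The continuous extension [Phi_c]. *)

Lemma dd_gt1 alpha n : 0 < alpha -> (2 <= n)%nat -> 1 < dd alpha n.
Proof.
  intros Ha Hn. unfold dd. assert (1 < INR n) by (apply (lt_INR 1 n) in Hn; simpl in Hn; lra).
  rewrite <- (Rpower_O (INR n)) by lra. apply Rpower_lt; lra.
Qed.

(* At integer points, the Gamma-quotient is the binomial coefficient and the
   real powers are ordinary powers. *)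
Lemma Phi_c_nat k alpha r p n w :
  0 < alpha -> (2 <= n)%nat -> (1 <= w <= n)%nat ->
  Phi_c k alpha r p n (INR w) = Phi k alpha r p n w.
Proof.
  intros Ha Hn Hw. pose proof (dd_gt1 alpha n Ha Hn) as Hd.
  assert (H1d : 1 / dd alpha n < 1)
    by (apply Rmult_lt_reg_r with (dd alpha n); [lra | field_simplify; lra]).
  unfold Phi_c, Phi, B, W, Binomial.C.
  rewrite <- minus_INR by lia. rewrite !Gamma_nat.
  rewrite !Rpower_pow; [reflexivity | lra | apply Rdiv_lt_0_compat; lra].
Qed.

Lemma is_derive_prod4 (f1 f2 f3 f4 : R -> R) z c1 c2 c3 c4 :
  is_derive f1 z (c1 * f1 z) -> is_derive f2 z (c2 * f2 z) ->
  is_derive f3 z (c3 * f3 z) -> is_derive f4 z (c4 * f4 z) ->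
  is_derive (fun t => f1 t * f2 t * f3 t * f4 t) z
    ((c1 + c2 + c3 + c4) * (f1 z * f2 z * f3 z * f4 z)).
Proof.
  intros H1 H2 H3 H4.
  pose proof (is_derive_mult _ _ z _ _
                (is_derive_mult _ _ z _ _
                   (is_derive_mult f1 f2 z _ _ H1 H2 Rmult_comm) H3 Rmult_comm) H4 Rmult_comm) as H.
  match type of H with is_derive _ _ ?l =>
    replace ((c1 + c2 + c3 + c4) * (f1 z * f2 z * f3 z * f4 z)) with l; [exact H|] end.
  unfold plus, mult; simpl. ring.
Qed.

Lemma is_derive_Gamma_quotient N z : 0 < z -> z < N ->
  is_derive (fun t => Gamma (N + 1) / (Gamma (t + 1) * Gamma (N - t + 1))) z
    ((dGamma (N - z + 1) / Gamma (N - z + 1) - dGamma (z + 1) / Gamma (z + 1)) *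
     (Gamma (N + 1) / (Gamma (z + 1) * Gamma (N - z + 1)))).
Proof.
  intros Hz HzN.
  assert (G1 : is_derive (fun t => Gamma (t + 1)) z (1 * dGamma (z + 1))).
  { apply (is_derive_comp Gamma (fun t => t + 1)); [apply Gamma_derive; lra|].
    auto_derive; auto; ring. }
  assert (G2 : is_derive (fun t => Gamma (N - t + 1)) z (-1 * dGamma (N - z + 1))).
  { apply (is_derive_comp Gamma (fun t => N - t + 1)); [apply Gamma_derive; lra|].
    auto_derive; auto; ring. }
  pose proof (Gamma_pos (z + 1) ltac:(lra)) as HG1.
  pose proof (Gamma_pos (N - z + 1) ltac:(lra)) as HG2.
  pose proof (is_derive_div (fun _ => Gamma (N + 1)) (fun t => Gamma (t + 1) * Gamma (N - t + 1))
     z 0 _ (is_derive_const _ _) (is_derive_mult _ _ z _ _ G1 G2 Rmult_comm)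
     ltac:(apply Rgt_not_eq, Rmult_lt_0_compat; lra)) as H.
  match type of H with is_derive _ _ ?l => replace (_ * _) with l; [exact H|] end.
  unfold plus, mult, scal; simpl. unfold mult; simpl. field. lra.
Qed.

Lemma is_derive_Rpower_exponent b z : 0 < b ->
  is_derive (fun t => Rpower b t) z (ln b * Rpower b z).
Proof. intros. unfold Rpower. auto_derive; [exact I | ring]. Qed.

Lemma is_derive_Rpower_exponent_rev b N z : 0 < b ->
  is_derive (fun t => Rpower b (N - t)) z (- ln b * Rpower b (N - z)).
Proof. intros. unfold Rpower. auto_derive; [exact I|]. unfold Rminus. ring. Qed.

Lemma is_derive_Rpower_base_comp (g : R -> R) z dg E : 0 < g z -> is_derive g z dg ->
  is_derive (fun t => Rpower (g t) E) z ((E * dg / g z) * Rpower (g z) E).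
Proof.
  intros Hg Hd. unfold Rpower.
  apply (is_derive_ext (fun t => exp (E * ln (g t)))); [reflexivity|].
  pose proof (is_derive_comp exp (fun t => E * ln (g t)) z (exp (E * ln (g z))) _
     ltac:(apply is_derive_Reals, derivable_pt_lim_exp)
     (is_derive_scal _ z E _
        (is_derive_comp ln g z (/ g z) dg
           ltac:(apply is_derive_Reals, derivable_pt_lim_ln; auto) Hd))) as H.
  match type of H with is_derive _ _ ?l => replace (_ * _) with l; [exact H|] end.
  unfold scal; simpl; unfold mult; simpl. field. lra.
Qed.

Definition f_deriv (k : nat) (p D s : R) : R := p / (1 - p) * (INR k * s ^ (k - 1) / (1 - / D ^ k)).

Lemma pow_gt1 D j : 1 < D -> (1 <= j)%nat -> 1 < D ^ j.
Proof.
  intros HD Hj. replace j with (S (j - 1)) by lia. simpl.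
  assert (1 <= D ^ (j - 1)) by (apply pow_R1_Rle; lra). nra.
Qed.

Lemma is_derive_f k p D s : p < 1 -> 1 < D -> (1 <= k)%nat ->
  is_derive (fun s => f k p D s) s (f_deriv k p D s).
Proof.
  intros Hp HD Hk. pose proof (pow_gt1 D k HD Hk).
  assert (/ D ^ k < 1) by (rewrite <- Rinv_1; apply Rinv_lt_contravar; lra).
  unfold f, f_deriv. auto_derive; [lra|].
  replace (Init.Nat.pred k) with (k - 1)%nat by lia. field.
  repeat split; lra.
Qed.

Definition Phi_c_logderiv (k : nat) (alpha r p : R) (n : nat) (z : R) : R :=
  let N := INR n in let D := dd alpha n in
  (dGamma (N - z + 1) / Gamma (N - z + 1) - dGamma (z + 1) / Gamma (z + 1))
  + ln (1 / D) + - ln (1 - 1 / D)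
  + r * mm alpha n * (f_deriv k p D (z / N) / N) / f k p D (z / N).

Definition logderiv_bound (k : nat) (p r N D z : R) : R :=
  ln (N - z + 1) - ln z + ln (1 / D) - ln (1 - 1 / D)
  + r * (N * ln D) * (f_deriv k p D (z / N) / N) / f k p D (z / N).

Section PhiC.
Variables (k : nat) (alpha r p : R) (n : nat) (z : R).
Hypotheses (Hk : (1 <= k)%nat) (Halpha : 0 < alpha) (Hp1 : p < 1) (Hn : (2 <= n)%nat)
  (Hz : 0 < z < INR n) (Hf : 0 < f k p (dd alpha n) (z / INR n)).

Let Hd : 1 < dd alpha n := dd_gt1 alpha n Halpha Hn.

Lemma one_minus_inv_dd_pos : 0 < 1 - 1 / dd alpha n.
Proof.
  assert (1 / dd alpha n < 1)
    by (apply Rmult_lt_reg_r with (dd alpha n); field_simplify; lra).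
  lra.
Qed.

Lemma Phi_c_pos : 0 < Phi_c k alpha r p n z.
Proof.
  pose proof (Gamma_pos (z + 1) ltac:(lra)). pose proof (Gamma_pos (INR n - z + 1) ltac:(lra)).
  pose proof (Gamma_pos (INR n + 1) ltac:(lra)).
  assert (0 < Gamma (INR n + 1) / (Gamma (z + 1) * Gamma (INR n - z + 1)))
    by (apply Rdiv_lt_0_compat; [lra | apply Rmult_lt_0_compat; lra]).
  unfold Phi_c.
  apply Rmult_lt_0_compat; [apply Rmult_lt_0_compat; [apply Rmult_lt_0_compat|]|];
    auto; apply Rpower_pos.
Qed.

Lemma is_derive_Phi_c :
  is_derive (Phi_c k alpha r p n) z (Phi_c_logderiv k alpha r p n z * Phi_c k alpha r p n z).
Proof.
  pose proof one_minus_inv_dd_pos.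
  unfold Phi_c, Phi_c_logderiv. cbv zeta.
  apply (is_derive_prod4 (fun t => Gamma (INR n + 1) / (Gamma (t + 1) * Gamma (INR n - t + 1)))
           (fun t => Rpower (1 / dd alpha n) t) (fun t => Rpower (1 - 1 / dd alpha n) (INR n - t))
           (fun t => Rpower (f k p (dd alpha n) (t / INR n)) (r * mm alpha n))).
  - apply is_derive_Gamma_quotient; lra.
  - apply is_derive_Rpower_exponent. apply Rdiv_lt_0_compat; lra.
  - apply is_derive_Rpower_exponent_rev; auto.
  - apply (is_derive_Rpower_base_comp (fun t => f k p (dd alpha n) (t / INR n))); auto.
    replace (f_deriv k p (dd alpha n) (z / INR n) / INR n)
      with (scal (/ INR n) (f_deriv k p (dd alpha n) (z / INR n)))
      by (unfold scal; simpl; unfold mult; simpl; field; lra).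
    apply (is_derive_comp (fun s => f k p (dd alpha n) s) (fun t => t / INR n)).
    + now apply is_derive_f.
    + auto_derive; [exact I | field; lra].
Qed.

(* The digamma bounds replace the Gamma part of the logarithmic derivative by
   elementary logarithms. *)
Lemma Phi_c_logderiv_le : 1 <= z ->
  Phi_c_logderiv k alpha r p n z <= logderiv_bound k p r (INR n) (dd alpha n) z.
Proof.
  intros Hz1. unfold Phi_c_logderiv, logderiv_bound, mm. cbv zeta.
  pose proof (digamma_le_ln (INR n - z + 1) ltac:(lra)).
  pose proof (ln_le_digamma_succ z Hz1). lra.
Qed.

End PhiC.

(** Negativity of the logarithmic derivative on the window [(n eta_1, n eta_2)].
    With [x = ln (sD)] it is bounded by [phi x = 2/N - x + A e^(m x)], a convex
    function, which is negative at both ends of the window. *)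

Lemma exp_pow_INR x m : exp x ^ m = exp (INR m * x).
Proof.
  induction m as [|m IH]; [simpl; rewrite Rmult_0_l, exp_0; auto|].
  rewrite S_INR. simpl. rewrite IH, <- exp_plus. f_equal. ring.
Qed.

Lemma exp_convex a x1 x x2 : 0 <= a -> x1 <= x <= x2 ->
  exp (a * x) * (x2 - x1) <= (x2 - x) * exp (a * x1) + (x - x1) * exp (a * x2).
Proof.
  intros Ha Hx.
  assert (Htangent : forall y, exp (a * y) >= exp (a * x) * (1 + a * (y - x))).
  { intros y. replace (a * y) with (a * x + a * (y - x)) by ring. rewrite exp_plus.
    pose proof (exp_ineq1_le (a * (y - x))). pose proof (exp_pos (a * x)). nra. }
  pose proof (Htangent x1). pose proof (Htangent x2).
  apply Rle_trans with ((x2 - x) * (exp (a * x) * (1 + a * (x1 - x)))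
                        + (x - x1) * (exp (a * x) * (1 + a * (x2 - x)))).
  - right; ring.
  - apply Rplus_le_compat; apply Rmult_le_compat_l; lra.
Qed.

Lemma convex_neg_between a A c y1 y y2 : 0 <= a -> 0 <= A -> y1 < y < y2 ->
  c - y1 + A * exp (a * y1) < 0 -> c - y2 + A * exp (a * y2) < 0 ->
  c - y + A * exp (a * y) < 0.
Proof.
  intros Ha HA Hy H1 H2.
  pose proof (exp_convex a y1 y y2 Ha ltac:(lra)) as Hconv.
  assert ((c - y + A * exp (a * y)) * (y2 - y1)
          <= (y2 - y) * (c - y1 + A * exp (a * y1)) + (y - y1) * (c - y2 + A * exp (a * y2))).
  { assert (A * (exp (a * y) * (y2 - y1))
            <= A * ((y2 - y) * exp (a * y1) + (y - y1) * exp (a * y2)))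
      by (apply Rmult_le_compat_l; lra).
    lra. }
  assert ((y2 - y) * (c - y1 + A * exp (a * y1)) < 0) by (apply Rmult_pos_neg; lra).
  assert ((y - y1) * (c - y2 + A * exp (a * y2)) < 0) by (apply Rmult_pos_neg; lra).
  apply Rmult_lt_reg_r with (y2 - y1); lra.
Qed.

(* [ln (1+u) >= u/(1+u) >= u/2] on [[0, 1]]. *)
Lemma ln_1p_ge_half u : 0 <= u <= 1 -> u / 2 <= ln (1 + u).
Proof.
  intros Hu. pose proof (ln_le_sub1 (1 / (1 + u)) ltac:(apply Rdiv_lt_0_compat; lra)) as H.
  rewrite ln_div, ln_1 in H by lra.
  replace (1 / (1 + u) - 1) with (- (u / (1 + u))) in H by (field; lra).
  assert (u / 2 <= u / (1 + u)).
  { apply Rmult_le_reg_r with (2 * (1 + u)); [lra|].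
    replace (u / 2 * (2 * (1 + u))) with (u * (1 + u)) by field.
    replace (u / (1 + u) * (2 * (1 + u))) with (2 * u) by (field; lra). nra. }
  lra.
Qed.

Lemma phi_neg_on_window N D z u A eta m :
  0 < N -> 0 < D -> 0 < u <= 1 -> 0 <= A -> 0 < eta ->
  (1 + u) * N / D < z -> z < N * eta ->
  2 / N < u / 4 -> A * 2 ^ m < u / 4 ->
  2 / N - ln (D * eta) + A * (D * eta) ^ m < 0 ->
  2 / N - ln (z * D / N) + A * (z * D / N) ^ m < 0.
Proof.
  intros HN HD Hu HA Heta Hlo Hhi HNu HAu Hright.
  assert (Hlo' : 1 + u < z * D / N).
  { apply Rmult_lt_reg_r with (N / D); [apply Rdiv_lt_0_compat; lra|].
    replace (z * D / N * (N / D)) with z by (field; lra).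
    replace ((1 + u) * (N / D)) with ((1 + u) * N / D) by (field; lra). lra. }
  assert (Hhi' : z * D / N < D * eta).
  { apply Rmult_lt_reg_r with N; auto. replace (z * D / N * N) with (D * z) by (field; lra).
    replace (D * eta * N) with (D * (N * eta)) by ring. apply Rmult_lt_compat_l; lra. }
  assert (Hexp : forall y, 0 < y -> y ^ m = exp (INR m * ln y))
    by (intros y Hy; rewrite <- exp_pow_INR, exp_ln; auto).
  rewrite Hexp by lra. rewrite Hexp in Hright by nra.
  apply convex_neg_between with (ln (1 + u)) (ln (D * eta)); auto.
  - apply pos_INR.
  - split; apply ln_increasing; lra.
  - rewrite <- Hexp by lra. pose proof (ln_1p_ge_half u ltac:(lra)).
    assert ((1 + u) ^ m <= 2 ^ m) by (apply pow_incr; lra).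
    assert (A * (1 + u) ^ m <= A * 2 ^ m) by (apply Rmult_le_compat_l; lra).
    lra.
Qed.

Lemma binomial_logderiv_bound N D z :
  0 < N -> 2 < D -> N / D <= z -> z < N ->
  ln (N - z + 1) - ln z + ln (1 / D) - ln (1 - 1 / D) <= 2 / N - ln (z * D / N).
Proof.
  intros HN HD Hz HzN.
  assert (HND : 0 < N / D) by (apply Rdiv_lt_0_compat; lra).
  assert (H2D : 2 / D < 1) by (apply Rmult_lt_reg_r with D; [lra | field_simplify; lra]).
  assert (H1D : 0 < 1 - 1 / D) by (assert (1 / D < 2 / D) by (apply Rmult_lt_compat_r;
                 [apply Rinv_0_lt_compat|]; lra); lra).
  set (q := (N - z + 1) / (N * (1 - 1 / D))).
  assert (Hq : 0 < q) by (apply Rdiv_lt_0_compat; nra).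
  assert (Eq : ln (N - z + 1) - ln z + ln (1 / D) - ln (1 - 1 / D) = ln q - ln (z * D / N)).
  { unfold q. rewrite !ln_div, !ln_mult, ln_1 by (try apply Rdiv_lt_0_compat; nra). ring. }
  rewrite Eq. pose proof (ln_le_sub1 q Hq).
  assert (q <= 1 + 2 / N).
  { unfold q. apply Rmult_le_reg_r with (N * (1 - 1 / D)); [nra|].
    replace ((N - z + 1) / (N * (1 - 1 / D)) * (N * (1 - 1 / D))) with (N - z + 1) by (field; lra).
    replace ((1 + 2 / N) * (N * (1 - 1 / D))) with (N + 2 - N / D - 2 / D) by (field; lra).
    lra. }
  lra.
Qed.

Lemma f_ge1 k p D s : 0 < p < 1 -> 1 < D -> (1 <= k)%nat -> 1 / D <= s -> 1 <= f k p D s.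
Proof.
  intros Hp HD Hk Hs. pose proof (pow_gt1 D k HD Hk).
  assert (Hinv : / D ^ k < 1) by (rewrite <- Rinv_1; apply Rinv_lt_contravar; lra).
  assert (/ D ^ k <= s ^ k).
  { rewrite <- pow_inv. apply pow_incr. split; [left; apply Rinv_0_lt_compat; lra|].
    replace (/ D) with (1 / D) by (field; lra). lra. }
  assert (0 <= (s ^ k - / D ^ k) / (1 - / D ^ k)) by (apply Rdiv_le_0_compat; lra).
  assert (0 < p / (1 - p)) by (apply Rdiv_lt_0_compat; lra).
  unfold f. nra.
Qed.

Lemma weight_logderiv_bound k p r mu N D s :
  (1 <= k)%nat -> 0 < p < 1 -> 0 < r -> 0 < N -> 1 < D -> 0 < s -> 1 <= f k p D s ->
  mu > INR k * p * r / (1 - p) -> / D ^ k <= 1 - INR k * p * r / (1 - p) / mu ->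
  r * (N * ln D) * (f_deriv k p D s / N) / f k p D s
  <= mu * ln D / D ^ (k - 1) * (s * D) ^ (k - 1).
Proof.
  intros Hk Hp Hr HN HD Hs Hf Hmu Hinv.
  set (mu' := INR k * p * r / (1 - p)) in *.
  assert (Hk1 : 1 <= INR k) by (apply (le_INR 1 k) in Hk; simpl in Hk; lra).
  assert (Hmu' : 0 < mu')
    by (unfold mu'; apply Rdiv_lt_0_compat; [repeat apply Rmult_lt_0_compat | ]; lra).
  pose proof (pow_gt1 D k HD Hk).
  assert (Hnorm : 0 < 1 - / D ^ k)
    by (assert (/ D ^ k < 1) by (rewrite <- Rinv_1; apply Rinv_lt_contravar; lra); lra).
  assert (HlnD : 0 < ln D) by (rewrite <- ln_1; apply ln_increasing; lra).
  assert (Hsm : 0 < s ^ (k - 1)) by (apply pow_lt; lra).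
  assert (E1 : r * (N * ln D) * (f_deriv k p D s / N) = ln D * s ^ (k - 1) * (mu' / (1 - / D ^ k))).
  { unfold f_deriv, mu'. field. repeat split; lra. }
  assert (E2 : mu * ln D / D ^ (k - 1) * (s * D) ^ (k - 1) = ln D * s ^ (k - 1) * mu).
  { rewrite Rpow_mult_distr. field. apply pow_nonzero. lra. }
  assert (Hratio : mu' / (1 - / D ^ k) <= mu).
  { apply Rmult_le_reg_r with (1 - / D ^ k); auto.
    replace (mu' / (1 - / D ^ k) * (1 - / D ^ k)) with mu' by (field; lra).
    replace mu' with (mu * (mu' / mu)) at 1 by (field; lra).
    apply Rmult_le_compat_l; lra. }
  rewrite E1, E2.
  assert (0 < mu' / (1 - / D ^ k)) by (apply Rdiv_lt_0_compat; lra).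
  apply Rle_trans with (ln D * s ^ (k - 1) * (mu' / (1 - / D ^ k))).
  - apply Rmult_le_reg_r with (f k p D s); [lra|].
    replace (ln D * s ^ (k - 1) * (mu' / (1 - / D ^ k)) / f k p D s * f k p D s)
      with (ln D * s ^ (k - 1) * (mu' / (1 - / D ^ k))) by (field; lra).
    assert (0 < ln D * s ^ (k - 1) * (mu' / (1 - / D ^ k)))
      by (apply Rmult_lt_0_compat; [apply Rmult_lt_0_compat|]; lra).
    nra.
  - apply Rmult_le_compat_l; [nra | exact Hratio].
Qed.

(* The window estimate for fixed (large) [N]: [D] plays the role of [N^alpha]
   and [P] of [N^(1-(k-1)alpha)]; the hypotheses on [u] and [A] are what
   "N large" provides. *)
Lemma window_logderiv_neg k p r lambda eta2 mu N D P z :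
  (1 <= k)%nat -> 0 < p < 1 -> 0 < r -> 0 < lambda -> 0 < eta2 < 1 ->
  mu > INR k * p * r / (1 - p) ->
  0 < N -> 2 < D -> 0 < P -> 1 <= N / D ->
  let u := D * (lambda / (P * ln D)) in
  let A := mu * ln D / D ^ (k - 1) in
  u <= 1 -> 2 / N < u / 4 -> A * 2 ^ (k - 1) < u / 4 ->
  2 / N - ln (D * eta2) + A * (D * eta2) ^ (k - 1) < 0 ->
  / D ^ k <= 1 - INR k * p * r / (1 - p) / mu ->
  N * (1 / D + lambda / (P * ln D)) < z < N * eta2 ->
  1 <= z /\ z < N /\ 1 <= f k p D (z / N) /\ logderiv_bound k p r N D z < 0.
Proof.
  intros Hk Hp Hr Hlambda Heta2 Hmu HN HD HP HND u A Hu HNu HAu Hright Hinv [Hzlo Hzhi].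
  assert (HlnD : 0 < ln D) by (rewrite <- ln_1; apply ln_increasing; lra).
  assert (Hu0 : 0 < u) by (unfold u; apply Rmult_lt_0_compat; [lra | apply Rdiv_lt_0_compat; nra]).
  assert (Hmu0 : 0 < mu).
  { assert (Hk1 : 1 <= INR k) by (apply (le_INR 1 k) in Hk; simpl in Hk; lra).
    assert (0 < INR k * p * r / (1 - p))
      by (apply Rdiv_lt_0_compat; [repeat apply Rmult_lt_0_compat | ]; lra).
    lra. }
  assert (HA : 0 <= A) by (unfold A; left; apply Rdiv_lt_0_compat; [nra|apply pow_lt; lra]).
  assert (Hwin : N * (1 / D + lambda / (P * ln D)) = (1 + u) * N / D)
    by (unfold u; field; repeat split; nra).
  rewrite Hwin in Hzlo.
  assert (HzND : N / D < z).
  { apply Rle_lt_trans with ((1 + u) * N / D); [|lra].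
    replace ((1 + u) * N / D) with ((1 + u) * (N / D)) by (field; lra).
    assert (0 < N / D) by lra. nra. }
  assert (HzN : z < N) by nra.
  assert (Hs : 1 / D <= z / N).
  { apply Rmult_le_reg_r with N; auto.
    replace (1 / D * N) with (N / D) by (field; lra).
    replace (z / N * N) with z by (field; lra). lra. }
  assert (Hf : 1 <= f k p D (z / N)) by (apply f_ge1; auto; lra).
  split; [lra|]. split; [lra|]. split; [exact Hf|]. unfold logderiv_bound.
  pose proof (binomial_logderiv_bound N D z HN HD ltac:(lra) HzN).
  pose proof (weight_logderiv_bound k p r mu N D (z / N) Hk Hp Hr HN ltac:(lra)
                ltac:(apply Rdiv_lt_0_compat; lra) Hf Hmu Hinv) as Hw.
  replace (z / N * D) with (z * D / N) in Hw by (field; lra). fold A in Hw.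
  pose proof (phi_neg_on_window N D z u A eta2 (k - 1) HN ltac:(lra) ltac:(lra) HA
                ltac:(lra) Hzlo ltac:(lra) HNu HAu Hright).
  lra.
Qed.

(** "For all sufficiently large [L]" is the filter [Rbar_locally p_infty]. *)

Lemma eventually_gt_linear a c : 0 < a -> Rbar_locally p_infty (fun L => c < a * L).
Proof.
  intros Ha. exists (c / a). intros L HL.
  apply Rmult_lt_compat_l with (r := a) in HL; auto.
  replace (a * (c / a)) with c in HL by (field; lra). lra.
Qed.

Lemma eventually_sq_exp_small b eps : 0 < b -> 0 < eps ->
  Rbar_locally p_infty (fun L => L * L * exp (- (b * L)) < eps).
Proof.
  intros Hb He. assert (Hbbe : 0 < b * b * eps) by (repeat apply Rmult_lt_0_compat; lra).
  set (T := 2 / b * ln (16 / (b * b * eps))).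
  exists (Rmax 0 T). intros L HL. pose proof (Rmax_l 0 T). pose proof (Rmax_r 0 T).
  set (e := exp (- (b * L / 2))). assert (He0 : 0 < e) by apply exp_pos.
  assert (Ee : exp (- (b * L)) = e * e) by (unfold e; rewrite <- exp_plus; f_equal; field).
  assert (Einv : exp (b * L / 2) * e = 1)
    by (unfold e; rewrite <- exp_plus, Rplus_opp_r; apply exp_0).
  (* [L <= (4/b) e^(bL/4)], squared: [L^2 <= (16/b^2) e^(bL/2)] *)
  assert (HL4 : L <= 4 / b * exp (b * L / 4)).
  { pose proof (exp_ineq1_le (b * L / 4)).
    apply Rmult_le_reg_l with (b / 4); [lra|].
    replace (b / 4 * (4 / b * exp (b * L / 4))) with (exp (b * L / 4)) by (field; lra). lra. }
  assert (Hsq : L * L * e <= 16 / (b * b)).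
  { assert (L * L <= 16 / (b * b) * exp (b * L / 2)).
    { replace (16 / (b * b) * exp (b * L / 2))
        with (4 / b * exp (b * L / 4) * (4 / b * exp (b * L / 4)))
        by (replace (b * L / 2) with (b * L / 4 + b * L / 4) by field;
            rewrite exp_plus; field; lra).
      apply Rmult_le_compat; lra. }
    replace (16 / (b * b)) with (16 / (b * b) * exp (b * L / 2) * e)
      by (rewrite Rmult_assoc, Einv; ring).
    apply Rmult_le_compat_r; lra. }
  (* [L > T] makes [e < b^2 eps / 16] *)
  assert (Hsmall : e < b * b * eps / 16).
  { unfold e. rewrite <- (exp_ln (b * b * eps / 16)) by lra. apply exp_increasing.
    rewrite <- (Rinv_div 16 (b * b * eps)), ln_Rinv by (apply Rdiv_lt_0_compat; lra).
    assert (HT : b / 2 * T < b / 2 * L) by (apply Rmult_lt_compat_l; lra).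
    replace (b / 2 * T) with (ln (16 / (b * b * eps))) in HT by (unfold T; field; lra).
    lra. }
  rewrite Ee. replace (L * L * (e * e)) with (L * L * e * e) by ring.
  apply Rle_lt_trans with (16 / (b * b) * e); [apply Rmult_le_compat_r; lra|].
  apply Rmult_lt_reg_l with (b * b / 16); [nra|].
  replace (b * b / 16 * (16 / (b * b) * e)) with e by (field; lra).
  replace (b * b / 16 * eps) with (b * b * eps / 16) by field. lra.
Qed.

Lemma eventually_const_sq_exp_small b C eps : 0 < b -> 0 < C -> 0 < eps ->
  Rbar_locally p_infty (fun L => C * (L * L * exp (- (b * L))) < eps).
Proof.
  intros Hb HC He. apply filter_imp with (fun L => L * L * exp (- (b * L)) < eps / C).
  - intros L HL. apply Rmult_lt_reg_r with (/ C); [apply Rinv_0_lt_compat; lra|].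
    replace (C * (L * L * exp (- (b * L))) * / C) with (L * L * exp (- (b * L))) by (field; lra).
    exact HL.
  - apply eventually_sq_exp_small; [lra | apply Rdiv_lt_0_compat; lra].
Qed.

(** The hypotheses of [window_logderiv_neg] at the scale [N = e^L],
    [D = N^alpha], [P = N^(1-(k-1)alpha)], for [L] large. *)

Section Scales.
Variables (k : nat) (alpha lambda mu eta2 : R).
Hypotheses (Hk : (2 <= k)%nat) (Halpha : 0 < alpha) (Hka : INR k * alpha <= 1)
  (Hlambda : 0 < lambda).

(* The two exponents governing the window: [u] decays like [e^((k alpha - 1) L)],
   and the second-order term like [e^(-beta L)] relative to it. *)
Let beta := (2 * INR k - 1) * alpha - 1.

Lemma INR_k_ge2 : 2 <= INR k.
Proof. apply (le_INR 2 k) in Hk. simpl in Hk. lra. Qed.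

Lemma scale_u L : 0 < L ->
  exp (alpha * L) * (lambda / (exp ((1 - (INR k - 1) * alpha) * L) * ln (exp (alpha * L))))
  = lambda * exp ((INR k * alpha - 1) * L) / (alpha * L).
Proof.
  intros HL. rewrite ln_exp.
  replace (exp ((INR k * alpha - 1) * L))
    with (exp (alpha * L) / exp ((1 - (INR k - 1) * alpha) * L)).
  - field. repeat split; try lra; apply Rgt_not_eq, exp_pos.
  - unfold Rdiv. rewrite <- exp_Ropp, <- exp_plus. f_equal. ring.
Qed.

Lemma scale_A L :
  mu * ln (exp (alpha * L)) / exp (alpha * L) ^ (k - 1)
  = mu * (alpha * L) * exp (- (INR (k - 1) * (alpha * L))).
Proof. rewrite ln_exp, exp_pow_INR, exp_Ropp. reflexivity. Qed.

(* [D = e^(alpha L) > 2] and [N / D >= 1] (as [alpha <= 1/2]). *)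
Lemma scale_D_gt2 L : 2 < alpha * L -> 2 < exp (alpha * L).
Proof. intros. pose proof (exp_ineq1_le (alpha * L)). lra. Qed.

Lemma scale_N_over_D L : 0 < L -> 1 <= exp L / exp (alpha * L).
Proof.
  intros HL. pose proof INR_k_ge2.
  unfold Rdiv. rewrite <- exp_Ropp, <- exp_plus, <- exp_0. apply exp_le_compat. nra.
Qed.

(* [u <= 1], since [k alpha <= 1] and [lambda <= alpha L]. *)
Lemma scale_u_le1 L : 0 < L -> lambda <= alpha * L ->
  lambda * exp ((INR k * alpha - 1) * L) / (alpha * L) <= 1.
Proof.
  intros HL Hla. assert (exp ((INR k * alpha - 1) * L) <= 1)
    by (rewrite <- exp_0 at 2; apply exp_le_compat; nra).
  pose proof (exp_pos ((INR k * alpha - 1) * L)).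
  apply Rmult_le_reg_r with (alpha * L); [nra|].
  replace (lambda * exp ((INR k * alpha - 1) * L) / (alpha * L) * (alpha * L))
    with (lambda * exp ((INR k * alpha - 1) * L)) by (field; nra).
  nra.
Qed.

(* [2/N] is negligible against [u]. *)
Lemma scale_N_small L : 1 <= L ->
  8 * alpha * (L * L * exp (- (INR k * alpha * L))) < lambda ->
  2 / exp L < lambda * exp ((INR k * alpha - 1) * L) / (alpha * L) / 4.
Proof.
  intros HL Hsmall.
  assert (Hsplit : exp ((INR k * alpha - 1) * L) = exp (INR k * alpha * L) * exp (- L))
    by (rewrite <- exp_plus; f_equal; ring).
  assert (Hinv : exp (INR k * alpha * L) * exp (- (INR k * alpha * L)) = 1)
    by (rewrite <- exp_plus, Rplus_opp_r; apply exp_0).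
  pose proof (exp_pos (INR k * alpha * L)). pose proof (exp_pos (- (INR k * alpha * L))).
  pose proof (exp_pos (- L)).
  assert (H8 : 8 * (alpha * L) * exp (- (INR k * alpha * L)) < lambda).
  { apply Rle_lt_trans with (8 * alpha * (L * L * exp (- (INR k * alpha * L)))); [|lra].
    assert (L * exp (- (INR k * alpha * L)) <= L * L * exp (- (INR k * alpha * L))) by nra.
    nra. }
  rewrite Hsplit. unfold Rdiv at 1. rewrite <- exp_Ropp.
  apply Rmult_lt_reg_r with (4 * (alpha * L) * exp (- (INR k * alpha * L)));
    [apply Rmult_lt_0_compat; [nra | auto]|].
  replace (lambda * (exp (INR k * alpha * L) * exp (- L)) / (alpha * L) / 4
           * (4 * (alpha * L) * exp (- (INR k * alpha * L))))
    with (lambda * exp (- L) * (exp (INR k * alpha * L) * exp (- (INR k * alpha * L))))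
    by (field; nra).
  rewrite Hinv, Rmult_1_r, (Rmult_comm lambda).
  replace (2 * exp (- L) * (4 * (alpha * L) * exp (- (INR k * alpha * L))))
    with (exp (- L) * (8 * (alpha * L) * exp (- (INR k * alpha * L)))) by ring.
  apply Rmult_lt_compat_l; auto.
Qed.

(* The convexity term [A 2^(k-1)] is negligible against [u]. *)
Lemma scale_A_small L : 0 < L ->
  4 * mu * (alpha * alpha) * 2 ^ (k - 1) * (L * L * exp (- (beta * L))) < lambda ->
  mu * (alpha * L) * exp (- (INR (k - 1) * (alpha * L))) * 2 ^ (k - 1)
  < lambda * exp ((INR k * alpha - 1) * L) / (alpha * L) / 4.
Proof.
  intros HL Hsmall. pose proof INR_k_ge2.
  assert (Hm : INR (k - 1) = INR k - 1) by (rewrite minus_INR by lia; simpl; ring).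
  assert (Hsplit : exp (- (INR (k - 1) * (alpha * L)))
                   = exp ((INR k * alpha - 1) * L) * exp (- (beta * L)))
    by (rewrite <- exp_plus, Hm; unfold beta; f_equal; ring).
  rewrite Hsplit. pose proof (exp_pos ((INR k * alpha - 1) * L)).
  pose proof (pow_lt 2 (k - 1) ltac:(lra)).
  apply Rmult_lt_reg_r with (4 * (alpha * L) / exp ((INR k * alpha - 1) * L));
    [apply Rdiv_lt_0_compat; nra|].
  replace (mu * (alpha * L) * (exp ((INR k * alpha - 1) * L) * exp (- (beta * L))) * 2 ^ (k - 1)
           * (4 * (alpha * L) / exp ((INR k * alpha - 1) * L)))
    with (4 * mu * (alpha * alpha) * 2 ^ (k - 1) * (L * L * exp (- (beta * L))))
    by (field; lra).
  replace (lambda * exp ((INR k * alpha - 1) * L) / (alpha * L) / 4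
           * (4 * (alpha * L) / exp ((INR k * alpha - 1) * L))) with lambda by (field; nra).
  exact Hsmall.
Qed.

(* The right end of the window: [phi (ln (D eta2)) < 0]. *)
Lemma scale_right_end L :
  0 < eta2 -> mu * eta2 ^ (k - 1) < 1 / 2 -> 0 < L -> 2 * (2 - ln eta2) < alpha * L ->
  2 / exp L - ln (exp (alpha * L) * eta2)
  + mu * (alpha * L) * exp (- (INR (k - 1) * (alpha * L))) * (exp (alpha * L) * eta2) ^ (k - 1) < 0.
Proof.
  intros Heta Hmeta HL Hbig.
  rewrite ln_mult, ln_exp by (try apply exp_pos; lra).
  rewrite Rpow_mult_distr, exp_pow_INR.
  replace (mu * (alpha * L) * exp (- (INR (k - 1) * (alpha * L)))
           * (exp (INR (k - 1) * (alpha * L)) * eta2 ^ (k - 1)))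
    with ((alpha * L) * (mu * eta2 ^ (k - 1)) * (exp (- (INR (k - 1) * (alpha * L)))
           * exp (INR (k - 1) * (alpha * L)))) by ring.
  rewrite <- exp_plus, Rplus_opp_l, exp_0, Rmult_1_r.
  assert (2 / exp L < 2).
  { pose proof (exp_ineq1_le L).
    apply Rmult_lt_reg_r with (exp L); [apply exp_pos|]. field_simplify; [lra|].
    apply Rgt_not_eq, exp_pos. }
  assert (alpha * L * (mu * eta2 ^ (k - 1)) <= alpha * L * (1 / 2))
    by (apply Rmult_le_compat_l; nra).
  lra.
Qed.

(* The normalisation [1 - D^-k] of [f] tends to 1. *)
Lemma scale_inv_D_small L rho : 0 < L -> 1 < rho * (alpha * L) ->
  / exp (alpha * L) ^ k <= rho.
Proof.
  intros HL Hbig. pose proof INR_k_ge2. pose proof (exp_neg_mul_1p (alpha * L)).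
  pose proof (exp_pos (- (alpha * L))).
  assert (HD1 : 1 < exp (alpha * L)) by (pose proof (exp_ineq1_le (alpha * L)); nra).
  apply Rle_trans with (/ exp (alpha * L)).
  - apply Rinv_le_contravar; [lra|]. rewrite <- pow_1 at 1.
    apply Rle_pow; [lra | lia].
  - rewrite <- exp_Ropp. assert (0 < alpha * L) by nra. assert (Hrho : 0 < rho) by nra.
    assert (exp (- (alpha * L)) * (1 + alpha * L) < rho * (1 + alpha * L)) by nra.
    left. apply Rmult_lt_reg_r with (1 + alpha * L); nra.
Qed.

End Scales.

(* The hypothesis on [mu] forces [mu eta2^(k-1) < 1/2], since [alpha0 / alpha <= 1/2]. *)
Lemma mu_eta2_small k alpha mu eta2 : (2 <= k)%nat -> 0 < alpha -> INR k * alpha <= 1 ->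
  alpha0 k alpha / alpha - mu * eta2 ^ (k - 1) > 0 -> mu * eta2 ^ (k - 1) < 1 / 2.
Proof.
  intros Hk Ha Hka Hmu1. assert (Hk2 : 2 <= INR k) by (apply (le_INR 2 k) in Hk; simpl in Hk; lra).
  assert (alpha0 k alpha / alpha <= 1 / 2); [|lra].
  unfold alpha0.
  replace (((2 * INR k - 1) * alpha - 1) / (2 * (INR k - 1)) / alpha)
    with (((2 * INR k - 1) * alpha - 1) / (alpha * (2 * (INR k - 1)))) by (field; lra).
  apply Rmult_le_reg_r with (alpha * (2 * (INR k - 1))); [nra|].
  replace (((2 * INR k - 1) * alpha - 1) / (alpha * (2 * (INR k - 1)))
           * (alpha * (2 * (INR k - 1))))
    with ((2 * INR k - 1) * alpha - 1) by (field; nra).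
  nra.
Qed.

Definition in_window (k : nat) (alpha lambda eta2 N z : R) : Prop :=
  N * (1 / Rpower N alpha + lambda / (Rpower N (1 - (INR k - 1) * alpha) * ln (Rpower N alpha)))
  < z < N * eta2.

Lemma window_at_large_scale k alpha r p lambda eta2 mu N :
  (2 <= k)%nat -> 0 < alpha -> 0 < r -> 0 < p < 1 -> INR k * alpha <= 1 -> 0 < lambda ->
  0 < eta2 < 1 -> mu * eta2 ^ (k - 1) < 1 / 2 -> mu > INR k * p * r / (1 - p) -> 2 < N ->
  let L := ln N in
  2 < alpha * L -> lambda < alpha * L -> 2 * (2 - ln eta2) < alpha * L ->
  1 < (1 - INR k * p * r / (1 - p) / mu) * (alpha * L) ->
  8 * alpha * (L * L * exp (- (INR k * alpha * L))) < lambda ->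
  4 * mu * (alpha * alpha) * 2 ^ (k - 1) * (L * L * exp (- (((2 * INR k - 1) * alpha - 1) * L)))
    < lambda ->
  forall z, in_window k alpha lambda eta2 N z ->
  1 <= z /\ z < N /\ 1 <= f k p (Rpower N alpha) (z / N) /\
  logderiv_bound k p r N (Rpower N alpha) z < 0.
Proof.
  intros Hk Ha Hr Hp Hka Hlambda Heta2 Hmeta Hmu HN L HaL Hla Hright Hrho Hs1 Hs2 z Hz.
  assert (HL : 1 < L) by (assert (Hk2 : 2 <= INR k) by (apply INR_k_ge2; auto); nra).
  assert (EN : N = exp L) by (unfold L; rewrite exp_ln; lra).
  unfold in_window, Rpower in Hz |- *. fold L in Hz |- *.
  apply (window_logderiv_neg k p r lambda eta2 mu N (exp (alpha * L))
           (exp ((1 - (INR k - 1) * alpha) * L)) z);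
    [lia | lra | lra | lra | lra | exact Hmu | lra | | apply exp_pos | | | | | | | exact Hz];
    cbv zeta.
  - now apply scale_D_gt2.
  - rewrite EN. apply (scale_N_over_D k); auto; lra.
  - rewrite scale_u by lra. apply (scale_u_le1 k); lra.
  - rewrite scale_u, EN by lra. apply (scale_N_small k); lra.
  - rewrite scale_u, scale_A by lra. apply (scale_A_small k); auto; lra.
  - rewrite scale_A, EN. apply (scale_right_end k); lra.
  - apply (scale_inv_D_small k); auto; lra.
Qed.

Lemma window_eventually k alpha r p lambda eta2 mu :
  (2 <= k)%nat -> 0 < alpha -> 0 < r -> 0 < p < 1 ->
  (2 * INR k - 1) * alpha > 1 -> INR k * alpha <= 1 -> 0 < lambda -> 0 < eta2 < 1 ->
  alpha0 k alpha / alpha - mu * eta2 ^ (k - 1) > 0 -> mu > INR k * p * r / (1 - p) ->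
  Rbar_locally p_infty (fun N => 2 < N /\
    forall z, in_window k alpha lambda eta2 N z ->
    1 <= z /\ z < N /\ 1 <= f k p (Rpower N alpha) (z / N) /\
    logderiv_bound k p r N (Rpower N alpha) z < 0).
Proof.
  intros Hk Ha Hr Hp H2k Hka Hlambda Heta2 Hmu1 Hmu2.
  pose proof (INR_k_ge2 k Hk) as Hk2.
  set (rho := 1 - INR k * p * r / (1 - p) / mu).
  assert (0 < INR k * p * r / (1 - p))
    by (apply Rdiv_lt_0_compat; [repeat apply Rmult_lt_0_compat|]; lra).
  assert (Hrho : 0 < rho).
  { unfold rho. assert (INR k * p * r / (1 - p) / mu < 1); [|lra].
    apply Rmult_lt_reg_r with mu; [lra|].
    replace (INR k * p * r / (1 - p) / mu * mu) with (INR k * p * r / (1 - p)) by (field; lra).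
    lra. }
  set (K := 4 * mu * (alpha * alpha) * 2 ^ (k - 1)).
  assert (HK : 0 < K) by (unfold K; pose proof (pow_lt 2 (k - 1) ltac:(lra));
                          repeat apply Rmult_lt_0_compat; nra).
  assert (Hev : Rbar_locally p_infty (fun L =>
            2 < alpha * L /\ lambda < alpha * L /\ 2 * (2 - ln eta2) < alpha * L
            /\ 1 < (rho * alpha) * L
            /\ (8 * alpha) * (L * L * exp (- (INR k * alpha * L))) < lambda
            /\ K * (L * L * exp (- (((2 * INR k - 1) * alpha - 1) * L))) < lambda)).
  { repeat apply filter_and;
      first [ apply eventually_gt_linear; nra
            | apply eventually_const_sq_exp_small; nra ]. }
  destruct Hev as [T HT].
  exists (Rmax (exp T) 2). intros N HN.
  pose proof (Rmax_l (exp T) 2). pose proof (Rmax_r (exp T) 2).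
  assert (HLT : T < ln N) by (rewrite <- (ln_exp T); apply ln_increasing; [apply exp_pos | lra]).
  destruct (HT (ln N) HLT) as [HaL [Hla [Hright [Hrl [Hs1 Hs2]]]]].
  split; [lra|].
  apply (window_at_large_scale k alpha r p lambda eta2 mu); auto; try lra.
  - apply (mu_eta2_small k alpha mu eta2); auto.
  - change (1 < rho * (alpha * ln N)). lra.
Qed.

Theorem lemma4p4
  (k : nat) (alpha r p lambda eta2 eta3 mu : R)
  (Hk : (2 <= k)%nat) (Halpha : 0 < alpha) (Hr : 0 < r)
  (Hp0 : 0 < p) (Hp1 : p < 1)
  (H2k : (2 * INR k - 1) * alpha > 1)
  (Hka : INR k * alpha <= 1)
  (Hktau : INR k >= tau p * ln (tau p) / (tau p - 1))
  (Hrcr : r < r_cr p)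
  (Hlambda : 0 < lambda)
  (Heta2 : 0 < eta2) (Heta23 : eta2 < eta3) (Heta3 : eta3 < 1)
  (Hmu1 : alpha0 k alpha / alpha - mu * eta2 ^ (k - 1) > 0)
  (Hmu2 : mu > INR k * p * r / (1 - p))
  (Heta3r : r * ln (1 - p) + eta3 > 0) :
  (forall (n w : nat), (2 <= n)%nat -> (1 <= w <= n)%nat ->
     Phi_c k alpha r p n (INR w) = Phi k alpha r p n w)
  /\
  (exists N : nat, forall n : nat, (N <= n)%nat ->
     forall z : R, INR n * eta1 k alpha lambda n < z < INR n * eta2 ->
       exists l : R, is_derive (Phi_c k alpha r p n) z l /\ l < 0).
Proof.
  split; [intros n w Hn Hw; now apply Phi_c_nat|].
  destruct (window_eventually k alpha r p lambda eta2 mu) as [M HM]; auto; try lra.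
  destruct (INR_unbounded M) as [N0 HN0].
  exists N0. intros n Hn z Hz.
  destruct (HM (INR n)) as [Hn2 Hwin]; [apply le_INR in Hn; lra|].
  assert (Hn2' : (2 <= n)%nat) by (assert (INR 1 < INR n) by (simpl; lra); apply INR_lt in H; lia).
  destruct (Hwin z Hz) as [Hz1 [HzN [Hf Hneg]]].
  (* [Phi_c' = (Phi_c'/Phi_c) Phi_c]: a negative factor times a positive one *)
  exists (Phi_c_logderiv k alpha r p n z * Phi_c k alpha r p n z). split.
  - apply is_derive_Phi_c; auto; try lia; unfold dd; lra.
  - apply Rmult_neg_pos.
    + eapply Rle_lt_trans; [apply Phi_c_logderiv_le|]; auto; lia || lra.
    + apply Phi_c_pos; auto; try lia; unfold dd; lra.
Qed.
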